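(* Let $f:\{0,1\}^n\to\{0,1\}$ be an arbitrary symmetric Boolean function and let $\operatorname{alt}(f)$ be its alternation number. Then $\mathsf N(f)\ge\frac{\operatorname{alt}(f)}{2}$.
   Context: $\mathsf N(f)$ is the minimum degree of a real polynomial $p$ with $|p(x)|\le1/3$ whenever $f(x)=0$ and $|p(x)|\ge1$ whenever $f(x)=1$. $f$ is symmetric if its value depends only on the Hamming weight of the input. A monotone path is a sequence in $\{0,1\}^n$ where each next point is obtained by changing one coordinate from $0$ to $1$; its alternation number is the number of consecutive pairs on which $f$ changes value; $\operatorname{alt}(f)$ is the maximum alternation number over monotone paths from $0^n$ to $1^n$. *)

From Stdlib Require Import Reals.
From HB Require Import structures.
From mathcomp Require Import all_boot all_order all_algebra.
From mathcomp Require Import Rstruct.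
From mathcomp Require Import mpoly.
Set Implicit Arguments. Unset Strict Implicit. Unset Printing Implicit Defensive.
Import Order.TTheory GRing.Theory Num.Theory.
Local Open Scope ring_scope.

Definition cube (n : nat) := {ffun 'I_n -> bool}.

Definition boolfun (n : nat) := cube n -> bool.

Definition hweight n (x : cube n) : nat := #|[set i | x i]|.

Definition symmetric_fun n (f : boolfun n) : Prop :=
  forall x y : cube n, hweight x = hweight y -> f x = f y.

Definition step n (x y : cube n) : bool :=
  [exists i, [&& ~~ x i, y i & [forall j, (j != i) ==> (y j == x j)]]].

Definition zero_pt n : cube n := [ffun _ => false].
Definition one_pt n : cube n := [ffun _ => true].

Definition monotone_path_01 n (x0 : cube n) (s : seq (cube n)) : bool :=
  [&& x0 == zero_pt n, last x0 s == one_pt n & path (@step n) x0 s].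

Definition alt_number n (f : boolfun n) (x0 : cube n) (s : seq (cube n)) : nat :=
  count id (pairmap (fun x y => f x != f y) x0 s).

Definition eval_cube n (p : {mpoly R[n]}) (x : cube n) : R :=
  p.@[fun i => (x i)%:R].

(* Total degree of a polynomial (msize p = 1 + degree, 0 for p = 0). *)
Definition mpoly_deg n (p : {mpoly R[n]}) : nat := (msize p).-1.

(* p "one-sided approximates" f in the sense of N(f):
   |p(x)| <= 1/3 when f(x) = 0 and |p(x)| >= 1 when f(x) = 1. *)
Definition N_rep n (f : boolfun n) (p : {mpoly R[n]}) : Prop :=
  forall x : cube n,
    (f x = false -> `|eval_cube p x| <= 3^-1) /\
    (f x = true -> 1 <= `|eval_cube p x|).

From Stdlib Require Import Reals.
From HB Require Import structures.
From mathcomp Require Import all_boot all_order all_algebra.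
From mathcomp Require Import Rstruct.
From mathcomp Require Import mpoly.
From mathcomp Require Import polyrcf.
From mathcomp Require Import zify ring lra.
Set Implicit Arguments. Unset Strict Implicit. Unset Printing Implicit Defensive.
Import Order.TTheory GRing.Theory Num.Theory.
Local Open Scope ring_scope.

(* Minsky-Papert symmetrization: averaging p^2 over each Hamming layer of the
   cube gives a univariate polynomial Q with deg Q <= 2 deg p.  As p one-sidedly
   approximates the symmetric f, Q(k) >= 1 on the layers where f = 1 and
   Q(k) <= 1/9 on those where f = 0.  A monotone path from 0^n to 1^n visits the
   layers 0, 1, ..., n in order, so each alternation of f along it is a sign
   change of Q - 1/2 between consecutive integers, hence yields a root of
   Q - 1/2 in a distinct interval ]k, k+1[; there are at most deg Q of them. *)

Section SignChanges.
Variable F : rcfType.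

Lemma count_sign_changes_le (g : {poly F}) (b : nat -> bool) (N : nat) :
  (forall j, (j <= N)%N -> if b j then 0 < g.[j%:R] else g.[j%:R] < 0) ->
  (count (fun j => b j != b j.+1) (iota 0 N) <= (size g).-1)%N.
Proof.
move=> sign_g; set P := fun j => b j != b j.+1.
have g_neq0 : g != 0.
  apply/eqP => g0; have := sign_g 0%N (leq0n _).
  by rewrite g0 horner0; case: (b 0%N); rewrite ltxx.
(* Total in j, so that it can be mapped over the crossing indices. *)
have crossing j : {r : F | (j < N)%N && P j -> j%:R < r < j.+1%:R /\ root g r}.
  case: (boolP ((j < N)%N && P j)) => [/andP[lt_jN P_j]|_]; last by exists 0.
  have gjgSj : g.[j%:R] * g.[j.+1%:R] < 0.
    move: P_j (sign_g j (ltnW lt_jN)) (sign_g j.+1 lt_jN); rewrite /P.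
    by case: (b j); case: (b j.+1) => //= _; nra.
  have le_j : j%:R <= j.+1%:R :> F by rewrite ler_nat.
  have [r] := poly_ivtoo le_j gjgSj.
  by rewrite in_itv /= => r_in r_root; exists r.
pose roots := [seq sval (crossing j) | j <- iota 0 N & P j].
have root_in j : j \in [seq j <- iota 0 N | P j] ->
    j%:R < sval (crossing j) < j.+1%:R /\ root g (sval (crossing j)).
  by rewrite mem_filter mem_iota /= => /andP[P_j lt_jN]; apply: (svalP (crossing j)); rewrite lt_jN.
have roots_uniq : uniq roots.
  rewrite map_inj_in_uniq ?filter_uniq ?iota_uniq // => i j /root_in[/andP[i_r r_i] _].
  move=> /root_in[/andP[j_r r_j] _] eq_r; rewrite eq_r in i_r r_i.
  have : i%:R < j.+1%:R :> F by apply: lt_trans r_j.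
  have : j%:R < i.+1%:R :> F by apply: lt_trans r_i.
  by rewrite !ltr_nat; lia.
have roots_root : all (root g) roots.
  by apply/allP => _ /mapP[j /root_in[_ root_j] ->].
have := max_poly_roots g_neq0 roots_root roots_uniq.
by rewrite size_map size_filter; case: (size g).
Qed.

Lemma count_level_crossings_le (g : {poly F}) (c : F) (b : nat -> bool) (N : nat) :
  (forall j, (j <= N)%N -> if b j then c < g.[j%:R] else g.[j%:R] < c) ->
  (count (fun j => b j != b j.+1) (iota 0 N) <= (size g).-1)%N.
Proof.
move=> level_g; apply: leq_trans (count_sign_changes_le (g := g - c%:P) _) _.
  move=> j /level_g; rewrite hornerD hornerN hornerC.
  by case: (b j); rewrite ?subr_gt0 ?subr_lt0.
have := size_polyD g (- c%:P); rewrite size_polyN.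
have := size_polyC_leq1 c.
move: (size g) (size c%:P) (size (g - c%:P)) => a b' d; lia.
Qed.
End SignChanges.

Lemma bin_sub_ffact n s k : (s <= k)%N ->
  ('C(n - s, k - s) * n ^_ s = 'C(n, k) * k ^_ s)%N.
Proof.
move=> le_sk; have [lt_nk | le_kn] := ltnP n k.
  rewrite (bin_small lt_nk) mul0n; have [lt_ns | le_sn] := ltnP n s.
    by rewrite ffact_small ?muln0.
  by rewrite bin_small ?mul0n //; lia.
apply/eqP; rewrite -(eqn_pmul2r (fact_gt0 (k - s))) mulnAC bin_ffact -mulnA.
rewrite ffact_fact // bin_ffact -(eqn_pmul2r (fact_gt0 (n - k))) mulnAC.
have e : (n - s - (k - s) = n - k)%N by lia.
rewrite -{1}e ffact_fact ?leq_sub2r // mulnC !ffact_fact //; lia.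
Qed.

Section Supersets.
Variable T : finType.
Implicit Types A B S : {set T}.

Lemma setUDKl S B : B \subset ~: S -> (S :|: B) :\: S = B.
Proof. by rewrite -disjoints_subset setDUl setDv set0U => /setDidPl. Qed.

Lemma setDUK S A : S \subset A -> S :|: (A :\: S) = A.
Proof.
move=> SA; apply/setP => i; rewrite !inE.
by case: (boolP (i \in S)) => // /(subsetP SA) ->.
Qed.

Lemma card_draws_supset S k : (#|S| <= k)%N ->
  #|[set A : {set T} | (#|A| == k) && (S \subset A)]| = 'C(#|T| - #|S|, k - #|S|).
Proof.
move=> le_Sk; have -> : (#|T| - #|S| = #|~: S|)%N by rewrite [RHS]cardsCs setCK.
have -> : [set A : {set T} | (#|A| == k) && (S \subset A)] =
          setU S @: [set B : {set T} | B \subset ~: S & #|B| == (k - #|S|)%N].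
  apply/setP => A; rewrite inE; apply/andP/imsetP => [[/eqP cardA SA] | [B]].
    exists (A :\: S); last by rewrite setDUK.
    by rewrite inE subsetDr cardsDS // cardA eqxx.
  rewrite inE => /andP[BS /eqP cardB] ->; split; last exact: subsetUl.
  rewrite cardsU disjoint_setI0 ?cards0 ?subn0 ?cardB ?subnKC //.
  by rewrite disjoint_sym disjoints_subset.
rewrite -cards_draws card_in_imset // => B1 B2.
by rewrite !inE => /andP[B1S _] /andP[B2S _] eqB; rewrite -(setUDKl B1S) eqB setUDKl.
Qed.

Lemma card_draws_supset_ffact S k :
  (#|[set A : {set T} | (#|A| == k) && (S \subset A)]| * #|T| ^_ #|S| =
   'C(#|T|, k) * k ^_ #|S|)%N.
Proof.
have [lt_kS | le_Sk] := ltnP k #|S|; last by rewrite card_draws_supset ?bin_sub_ffact.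
rewrite (ffact_small lt_kS) muln0; apply/eqP; rewrite muln_eq0 cards_eq0; apply/orP; left.
apply/eqP/setP => A; rewrite !inE; apply/negbTE/andP => -[/eqP cardA /subset_leq_card].
by rewrite cardA leqNgt lt_kS.
Qed.

End Supersets.

Definition cube_support n (x : cube n) : {set 'I_n} := [set i | x i].

Lemma cube_support_bij n : bijective (@cube_support n).
Proof.
exists (fun A : {set 'I_n} => [ffun i => i \in A] : cube n) => [x | A].
  by apply/ffunP => i; rewrite ffunE inE.
by apply/setP => i; rewrite inE ffunE.
Qed.

Lemma card_cube_support n (P : {pred {set 'I_n}}) :
  #|[set x : cube n | cube_support x \in P]| = #|P|.
Proof. exact/on_card_preimset/onW_bij/cube_support_bij. Qed.

Lemma card_layer n k : #|[set x : cube n | hweight x == k]| = 'C(n, k).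
Proof.
rewrite -[n in 'C(n, k)]card_ord -card_draws -card_cube_support.
by apply: eq_card => x; rewrite !inE.
Qed.

Lemma card_layer_supset n (S : {set 'I_n}) k :
  (#|[set x : cube n | (hweight x == k) && (S \subset cube_support x)]| * n ^_ #|S| =
   'C(n, k) * k ^_ #|S|)%N.
Proof.
rewrite -[n in (_ * n ^_ _)%N]card_ord -[n in 'C(n, k)]card_ord.
rewrite -card_draws_supset_ffact -card_cube_support.
by congr (_ * _)%N; apply: eq_card => x; rewrite !inE.
Qed.

Definition mnm_support n (m : 'X_{1..n}) : {set 'I_n} := [set i | (0 < m i)%N].

Lemma card_mnm_support_le_mdeg n (m : 'X_{1..n}) : (#|mnm_support m| <= mdeg m)%N.
Proof.
rewrite mdegE -sum1_card big_mkcond /=.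
by apply: leq_sum => i _; rewrite inE; case: (m i).
Qed.

Lemma prod_cube_mnm (K : comPzSemiRingType) n (m : 'X_{1..n}) (x : cube n) :
  \prod_i ((x i)%:R : K) ^+ m i = (mnm_support m \subset cube_support x)%:R.
Proof.
have [supp_x | /subsetPn[i]] := boolP (mnm_support m \subset cube_support x).
  apply: big1 => i _; have [-> // | m_i] := posnP (m i).
  have /(subsetP supp_x) : i \in mnm_support m by rewrite inE.
  by rewrite inE => ->; rewrite expr1n.
rewrite !inE => m_i /negbTE x_i; rewrite (bigD1 i) //= x_i expr0n.
by rewrite eqn0Ngt m_i mul0r.
Qed.

Lemma sum_layer_mnm (K : comPzSemiRingType) n (m : 'X_{1..n}) k :
  \sum_(x : cube n | hweight x == k) \prod_i ((x i)%:R : K) ^+ m i =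
  #|[set x : cube n | (hweight x == k) && (mnm_support m \subset cube_support x)]|%:R.
Proof.
under eq_bigr do rewrite prod_cube_mnm.
rewrite -natr_sum -sum1dep_card big_mkcondr /=.
by congr _%:R; apply: eq_bigr => x _; case: (_ \subset _).
Qed.

Definition ffact_poly (K : nzRingType) (s : nat) : {poly K} :=
  \prod_(0 <= j < s) ('X - (j%:R)%:P).

Lemma size_ffact_poly (K : nzRingType) s : size (ffact_poly K s) = s.+1.
Proof. by rewrite size_prod_XsubC size_iota subn0. Qed.

Lemma horner_ffact_poly (K : comNzRingType) s k : (ffact_poly K s).[k%:R] = (k ^_ s)%:R.
Proof.
elim: s => [|s IH]; first by rewrite /ffact_poly big_geq // hornerC.
rewrite /ffact_poly big_nat_recr //= hornerM -/(ffact_poly K s) IH hornerXsubC.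
have [lt_ks | le_sk] := ltnP k s; first by rewrite ffactnSr (ffact_small lt_ks) !mul0r.
by rewrite ffactnSr natrM natrB.
Qed.

(* On the cube the monomial of m is the indicator of [mnm_support m \subset x];
   its sum over layer k is 'C(n - s, k - s) = 'C(n, k) * k ^_ s / n ^_ s with
   s = #|mnm_support m|, a polynomial of degree s in k. *)
Lemma mpoly_symmetrization n (P : {mpoly R[n]}) :
  exists2 Q : {poly R}, (size Q <= msize P)%N &
    forall k, Q.[k%:R] * 'C(n, k)%:R = \sum_(x : cube n | hweight x == k) eval_cube P x.
Proof.
pose L s := ((n ^_ s)%:R)^-1 *: ffact_poly R s.
exists (\sum_(m <- msupp P) P@_m *: L #|mnm_support m|).
  rewrite big_seq; apply: (big_ind (fun q : {poly R} => size q <= msize P)%N).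
  - by rewrite size_poly0.
  - move=> p q p_le q_le; apply: leq_trans (size_polyD _ _) _.
    by rewrite geq_max p_le q_le.
  move=> m m_supp; apply: leq_trans (size_scale_leq _ _) _.
  apply: leq_trans (size_scale_leq _ _) _; rewrite size_ffact_poly.
  by apply: leq_trans (msize_mdeg_lt m_supp); rewrite ltnS card_mnm_support_le_mdeg.
move=> k; rewrite horner_sum big_distrl /=.
under [RHS]eq_bigr do rewrite /eval_cube mevalE.
rewrite exchange_big /=; apply: eq_bigr => m _.
rewrite -big_distrr /= sum_layer_mnm !hornerZ horner_ffact_poly -mulrA; congr (_ * _).
have n_s_neq0 : (n ^_ #|mnm_support m|)%:R != 0 :> R.
  by rewrite pnatr_eq0 -lt0n ffact_gt0 -[n in (_ <= n)%N]card_ord max_card.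
apply: (mulIf n_s_neq0); rewrite -natrM card_layer_supset natrM.
by field.
Qed.

Lemma N_rep_layer_sign n (f : boolfun n) (p : {mpoly R[n]}) (q : R) (x : cube n) :
  symmetric_fun f -> N_rep f p ->
  q * 'C(n, hweight x)%:R = \sum_(y : cube n | hweight y == hweight x) eval_cube (p * p) y ->
  if f x then 2^-1 < q else q < 2^-1.
Proof.
move=> f_sym p_rep q_avg; set k := hweight x in q_avg *.
have C_gt0 : 0 < 'C(n, k)%:R :> R.
  by rewrite ltr0n bin_gt0 -[n in (_ <= n)%N]card_ord max_card.
have card_k : \sum_(y : cube n | hweight y == k) 1 = 'C(n, k)%:R :> R.
  by rewrite -card_layer -sum1dep_card natr_sum.
have f_layer y : hweight y == k -> f y = f x by move/eqP; apply: f_sym.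
have sqr_eval y : eval_cube (p * p) y = `|eval_cube p y| ^+ 2.
  by rewrite /eval_cube mevalM real_normK ?num_real.
case fx: (f x).
  have : 'C(n, k)%:R <= q * 'C(n, k)%:R.
    rewrite q_avg -card_k; apply: ler_sum => y /f_layer; rewrite fx sqr_eval.
    by move=> /(p_rep y).2 ge1; rewrite exprn_ege1.
  by nra.
have : q * 'C(n, k)%:R <= 9^-1 * 'C(n, k)%:R.
  rewrite q_avg -card_k mulr_sumr; apply: ler_sum => y /f_layer; rewrite fx sqr_eval.
  move=> /(p_rep y).1 le3; have := normr_ge0 (eval_cube p y); nra.
by nra.
Qed.

Lemma mpoly_deg_mul_le n (p q : {mpoly R[n]}) :
  (mpoly_deg (p * q) <= mpoly_deg p + mpoly_deg q)%N.
Proof.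
have [-> | p_neq0] := eqVneq p 0; first by rewrite mul0r leq_addr.
have [-> | q_neq0] := eqVneq q 0; first by rewrite mulr0 leq_addl.
rewrite /mpoly_deg msizeM //.
have := msize_poly_eq0 p; have := msize_poly_eq0 q.
rewrite (negbTE p_neq0) (negbTE q_neq0); move: (msize p) (msize q) => a b; lia.
Qed.

Lemma step_hweight n (x y : cube n) : step x y -> hweight y = (hweight x).+1.
Proof.
move=> /existsP[i /and3P[x_i y_i /forallP y_x]].
rewrite /hweight; have -> : [set j | y j] = i |: [set j | x j].
  apply/setP => j; rewrite !inE; have [-> // | j_i] := eqVneq j i.
  by have := y_x j; rewrite j_i => /eqP ->.
by rewrite cardsU1 inE x_i.
Qed.

Lemma path_step_hweight n (x0 : cube n) s : path (@step n) x0 s ->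
  forall j, (j <= size s)%N -> hweight (nth x0 (x0 :: s) j) = (hweight x0 + j)%N.
Proof.
elim: s x0 => [|y s IH] x0 /=; first by move=> _ j; rewrite leqn0 => /eqP ->; rewrite addn0.
move=> /andP[x0_y y_s] [|j] j_le /=; first by rewrite addn0.
by rewrite (set_nth_default y) // IH // (step_hweight x0_y) addSnnS.
Qed.

Lemma hweight_zero_pt n : hweight (zero_pt n) = 0%N.
Proof. by apply/eqP; rewrite cards_eq0; apply/eqP/setP => i; rewrite !inE ffunE. Qed.

Lemma hweight_one_pt n : hweight (one_pt n) = n.
Proof.
by rewrite /hweight -[RHS]card_ord; apply: eq_card => i; rewrite !inE ffunE.
Qed.

Lemma monotone_path_01_hweight n (x0 : cube n) s : monotone_path_01 x0 s ->
  size s = n /\ forall j, (j <= n)%N -> hweight (nth x0 (x0 :: s) j) = j.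
Proof.
move=> /and3P[/eqP-> /eqP s_end /path_step_hweight s_hweight].
have size_s : size s = n.
  have := s_hweight _ (leqnn (size s)).
  by rewrite [nth _ _ _](nth_last _ (_ :: s)) /= s_end hweight_one_pt hweight_zero_pt.
by split=> // j j_le; rewrite s_hweight ?size_s // hweight_zero_pt.
Qed.

Lemma alt_number_nth n (f : boolfun n) (x0 : cube n) s :
  alt_number f x0 s =
  count (fun j => f (nth x0 (x0 :: s) j) != f (nth x0 (x0 :: s) j.+1)) (iota 0 (size s)).
Proof.
rewrite /alt_number (_ : pairmap _ x0 s =
  [seq f (nth x0 (x0 :: s) j) != f (nth x0 (x0 :: s) j.+1) | j <- iota 0 (size s)]).
  by rewrite count_map.
apply: (@eq_from_nth _ false); first by rewrite size_pairmap size_map size_iota.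
move=> j; rewrite size_pairmap => lt_js.
by rewrite (nth_pairmap x0) // (nth_map 0%N) ?size_iota // nth_iota.
Qed.

Theorem lemma3p15 (n : nat) (f : boolfun n) :
  symmetric_fun f ->
  forall (p : {mpoly R[n]}), N_rep f p ->
  forall (x0 : cube n) (s : seq (cube n)), monotone_path_01 x0 s ->
  (alt_number f x0 s <= 2 * mpoly_deg p)%N.
Proof.
move=> f_sym p p_rep x0 s p_mono.
have [size_s hweight_s] := monotone_path_01_hweight p_mono.
have [Q size_Q Q_layer] := mpoly_symmetrization (p * p).
rewrite alt_number_nth size_s mul2n -addnn.
apply: leq_trans (mpoly_deg_mul_le p p).
apply: (@leq_trans (size Q).-1); last by rewrite /mpoly_deg -!subn1 leq_sub2r.
apply: (count_level_crossings_le (c := 2^-1)) => j le_jn.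
have := N_rep_layer_sign (x := nth x0 (x0 :: s) j) f_sym p_rep (Q_layer _).
by rewrite hweight_s.
Qed.
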